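(* For integers $0\le a<b$ let $\Delta^{(odd)}_3([a,b))$ denote the number of odd evil integers in $[a,b)$ divisible by $3$ minus the number of odd odious integers in $[a,b)$ divisible by $3$. Then: 1) $\Delta^{(odd)}_3([0,2^n))=3^{\lfloor n/2\rfloor-1}$ for all integers $n\ge 2$. 2) For integers $n,m$: $$\Delta^{(odd)}_3([2^n,2^n+2^m))=\begin{cases}0, & n \text{ and } m \text{ even},\ 2\le m\le n-2,\\ 3^{\frac{m-2}{2}}, & n \text{ odd},\ m \text{ even},\ 2\le m\le n-1,\\ -3^{\frac{m-3}{2}}, & n \text{ even},\ m \text{ odd},\ 3\le m\le n-1,\\ 2\cdot 3^{\frac{m-3}{2}}, & n \text{ and } m \text{ odd},\ 3\le m\le n-2.\end{cases}$$ 3) For integers $n,m$: $$\Delta^{(odd)}_3([2^n+2^{n-2},\,2^n+2^{n-2}+2^m))=\begin{cases}-3^{\frac{m-2}{2}}, & n \text{ and } m \text{ even},\ 2\le m\le n-4,\\ 0, & n \text{ odd},\ m \text{ even},\ 2\le m\le n-3,\\ -2\cdot 3^{\frac{m-3}{2}}, & n \text{ even},\ m \text{ odd},\ 3\le m\le n-3,\\ 3^{\frac{m-3}{2}}, & n \text{ and } m \text{ odd},\ 3\le m\le n-4.\end{cases}$$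
   Context: A nonnegative integer is called evil if its binary expansion contains an even number of 1's, and odious if it contains an odd number of 1's; in particular $0$ is evil. An interval $[a,b)$ means the set of integers $x$ with $a\le x<b$. *)

From mathcomp Require Import all_boot all_order all_algebra.
Set Implicit Arguments. Unset Strict Implicit. Unset Printing Implicit Defensive.
Import Order.TTheory GRing.Theory Num.Theory.

(* Number of 1's in the binary expansion of n (fuel k >= n suffices). *)
Fixpoint ones_aux (k n : nat) : nat :=
  match k with
  | 0 => 0
  | k'.+1 => if n is 0 then 0 else odd n + ones_aux k' n./2
  end.
Definition ones (n : nat) : nat := ones_aux n n.

Definition evil (n : nat) : bool := ~~ odd (ones n).
Definition odious (n : nat) : bool := odd (ones n).

Definition delta3_odd (a b : nat) : int :=
  (#|[set x : 'I_b | (a <= x)%N && odd (x : nat) && (3 %| (x : nat))%N && evil x]|%:Z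
   - #|[set x : 'I_b | (a <= x)%N && odd (x : nat) && (3 %| (x : nat))%N && odious x]|%:Z)%R.

Example ones_ex : ones 6 = 2. Proof. by []. Qed.

From mathcomp Require Import all_boot all_order all_algebra.
From mathcomp Require Import zify.
Import Order.TTheory GRing.Theory Num.Theory.
Local Open Scope ring_scope.

(* Write T m r for the signed count, over odd y < 2^m with 3 | y + r, of
   (-1)^(ones y).  Since ones (c 2^m + y) = ones c + ones y for y < 2^m, the
   difference over a dyadic block [c 2^m, (c+1) 2^m) is (-1)^(ones c) T m (c 2^m).
   Splitting [0, 2^(k+2)) by its two leading bits gives
   T (k+2) r = 3 T k r - S k, where S k is the signed count of all odd y < 2^k:
   as 2^k is a unit mod 3, the shifts r, r + 2^k, r + 2^(k+1) cover Z/3.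
   Moreover S k = 0 for k >= 2, so T m r = 3^s T 2 r or 3^s T 3 r, and the
   theorem reduces to six small values and to 2^n mod 3. *)

Lemma ones_auxE k1 k2 n : (n <= k1)%N -> (n <= k2)%N -> ones_aux k1 n = ones_aux k2 n.
Proof.
elim: k1 k2 n => [|k1 IH] [|k2] [|n] //= le_n_k1 le_n_k2.
congr (_ + _)%N; apply: IH; rewrite uphalfE leq_half_double -addnn; lia.
Qed.

Lemma onesE n : ones n = if n is 0 then 0%N else (odd n + ones n./2)%N.
Proof.
case: n => [|n] //; rewrite /ones /=; congr (_ + _)%N; apply: ones_auxE => //.
rewrite uphalfE leq_half_double -addnn; lia.
Qed.

Lemma ones_double (b : bool) n : ones (b + n.*2) = (b + ones n)%N.
Proof.
case: n => [|n]; first by case: b.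
by rewrite onesE; case: b => /=; rewrite ?add0n ?doubleK ?uphalf_double ?odd_double.
Qed.

Lemma ones_block c k y : (y < 2 ^ k)%N -> ones (c * 2 ^ k + y) = (ones c + ones y)%N.
Proof.
elim: k y => [|k IH] y lt_y.
  by move: lt_y; rewrite expn0 ltnS leqn0 => /eqP ->; rewrite muln1 !addn0.
have lt_half_y : (y./2 < 2 ^ k)%N by rewrite ltn_half_double -mul2n -expnS.
have -> : (c * 2 ^ k.+1 + y = odd y + (c * 2 ^ k + y./2).*2)%N.
  rewrite -{1}(odd_double_half y) doubleD expnS -!mul2n; lia.
rewrite ones_double IH // -{3}(odd_double_half y) ones_double; lia.
Qed.

Lemma ones_mul_pow2 c k : ones (c * 2 ^ k) = ones c.
Proof. by rewrite -[(c * 2 ^ k)%N]addn0 ones_block ?expn_gt0 ?addn0. Qed.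

Lemma expn2_mod3 n : (2 ^ n = (if odd n then 2 else 1) %[mod 3])%N.
Proof. by elim: n => // n IH; rewrite expnS -modnMmr IH /=; case: (odd n). Qed.

Definition signed_sum (k : nat) (P : pred nat) : int :=
  \sum_(0 <= y < (2 ^ k)%N) (P y)%:R * (-1) ^+ ones y.

Lemma signed_sumS k P :
  signed_sum k.+1 P = signed_sum k P - signed_sum k (fun y => P (2 ^ k + y)%N).
Proof.
rewrite /signed_sum expnS mul2n -addnn (big_cat_nat (leq0n _) (leq_addr _ _)) /=.
congr (_ + _); rewrite -{1}(add0n (2 ^ k)%N) big_addn addnK -sumrN.
apply: eq_big_nat => y /andP[_ lt_y]; rewrite (addnC y).
by rewrite -{2}[(2 ^ k)%N]mul1n ones_block // exprD expr1 mulN1r mulrN.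
Qed.

Lemma signed_sum_odd k : signed_sum k.+2 odd = 0.
Proof.
rewrite signed_sumS; apply/eqP; rewrite subr_eq0; apply/eqP/eq_bigr => y _.
by rewrite oddD expnS oddM.
Qed.

Definition mod3_sum (k r : nat) : int := signed_sum k (fun y => odd y && (3 %| y + r)%N).

Lemma mod3_sum_eqmod k r1 r2 : (r1 = r2 %[mod 3])%N -> mod3_sum k r1 = mod3_sum k r2.
Proof.
by move=> eq_r; apply: eq_bigr => y _; rewrite /dvdn -modnDmr eq_r modnDmr.
Qed.

Lemma mod3_sumS k r : (0 < k)%N -> mod3_sum k.+1 r = mod3_sum k r - mod3_sum k (r + 2 ^ k).
Proof.
move=> k_gt0; rewrite /mod3_sum signed_sumS; congr (_ - _); apply: eq_bigr => y _.
case: k k_gt0 => // k _; rewrite oddD expnS oddM addFb.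
by rewrite -addnA addnC -addnA [(r + _)%N]addnC.
Qed.

Lemma mod3_sum_residues k r :
  mod3_sum k r + mod3_sum k (r + 2 ^ k) + mod3_sum k (r + 2 ^ k.+1) = signed_sum k odd.
Proof.
rewrite -!big_split /=; apply: eq_bigr => y _; rewrite -!mulrDl; congr (_ * _).
case: (odd y) => //=; rewrite -!natrD; congr _%:R.
have : (2 ^ k %% 3 != 0)%N by rewrite expn2_mod3; case: (odd k).
rewrite expnS !addnA; move: (y + r)%N (2 ^ k)%N => a p; rewrite /dvdn; lia.
Qed.

Lemma mod3_sumSS k r : (1 < k)%N -> mod3_sum k.+2 r = 3 * mod3_sum k r.
Proof.
move=> k_gt1; have k_gt0 := ltnW k_gt1.
rewrite mod3_sumS // !mod3_sumS //.
have -> : mod3_sum k (r + 2 ^ k.+1 + 2 ^ k) = mod3_sum k r.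
  by apply: mod3_sum_eqmod; rewrite expnS; move: (2 ^ k)%N => p; lia.
have := mod3_sum_residues k r.
case: k k_gt1 {k_gt0} => [|[|k]] // _; rewrite signed_sum_odd; lia.
Qed.

Lemma mod3_sum_add_double k s r :
  (1 < k)%N -> mod3_sum (k + s.*2) r = 3 ^+ s * mod3_sum k r.
Proof.
move=> k_gt1; elim: s => [|s IH]; first by rewrite addn0 mul1r.
by rewrite doubleS !addnS mod3_sumSS ?IH ?exprS ?mulrA //; apply: leq_trans k_gt1 _; lia.
Qed.

Lemma mod3_sum_even m r :
  (2 <= m)%N -> ~~ odd m -> mod3_sum m r = 3 ^+ ((m - 2) %/ 2) * mod3_sum 2 r.
Proof. by move=> m_ge2 m_even; rewrite -mod3_sum_add_double //; congr mod3_sum; lia. Qed.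

Lemma mod3_sum_odd m r :
  (3 <= m)%N -> odd m -> mod3_sum m r = 3 ^+ ((m - 3) %/ 2) * mod3_sum 3 r.
Proof. by move=> m_ge3 m_odd; rewrite -mod3_sum_add_double //; congr mod3_sum; lia. Qed.

Lemma mod3_sum2 : [/\ mod3_sum 2 0 = 1, mod3_sum 2 1 = 0 & mod3_sum 2 2 = -1].
Proof. by split; rewrite /mod3_sum /signed_sum unlock; vm_compute. Qed.

Lemma mod3_sum3 : [/\ mod3_sum 3 0 = 1, mod3_sum 3 1 = 1 & mod3_sum 3 2 = -2].
Proof. by split; rewrite /mod3_sum /signed_sum unlock; vm_compute. Qed.

Lemma delta3_oddE a b :
  delta3_odd a b = \sum_(a <= x < b) (odd x && (3 %| x)%N)%:R * (-1) ^+ ones x.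
Proof.
rewrite /delta3_odd !cardsE -!sum1_card -!natz !natr_sum.
rewrite [X in _ - X]big_mkcond [X in X - _]big_mkcond -sumrB big_geq_mkord [in RHS]big_mkcond.
apply: eq_bigr => x _; rewrite !unfold_in /evil /odious -signr_odd.
by case: (a <= x)%N; case: (odd x); case: (3 %| x)%N; case: (odd (ones x)); rewrite /= ?andbF ?subr0 ?sub0r.
Qed.

Lemma delta3_odd_dyadic c m : (0 < m)%N ->
  delta3_odd (c * 2 ^ m) (c * 2 ^ m + 2 ^ m) = (-1) ^+ ones c * mod3_sum m (c * 2 ^ m).
Proof.
move=> m_gt0; have even_pow2 : odd (2 ^ m) = false by case: m m_gt0 => // m _; rewrite expnS oddM.
rewrite delta3_oddE -{1}(add0n (c * 2 ^ m)%N) big_addn addKn mulr_sumr.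
apply: eq_big_nat => y /andP[_ lt_y]; rewrite [in ones _]addnC ones_block // exprD mulrCA.
by rewrite oddD oddM even_pow2 andbF addbF.
Qed.

Lemma delta3_odd_pow2 n m : (0 < m <= n)%N ->
  delta3_odd (2 ^ n) (2 ^ n + 2 ^ m) = - mod3_sum m (if odd n then 2 else 1).
Proof.
case/andP=> m_gt0 le_mn; have pow2_split : (2 ^ n = 2 ^ (n - m) * 2 ^ m)%N by rewrite -expnD subnK.
rewrite pow2_split delta3_odd_dyadic // -pow2_split -(mul1n (2 ^ (n - m))%N) ones_mul_pow2.
by rewrite expr1 mulN1r (mod3_sum_eqmod _ _ _ (expn2_mod3 n)).
Qed.

Lemma delta3_odd_5pow2 n m : (0 < m)%N -> (m + 2 <= n)%N ->
  delta3_odd (2 ^ n + 2 ^ (n - 2)) (2 ^ n + 2 ^ (n - 2) + 2 ^ m)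
    = mod3_sum m (if odd n then 1 else 2).
Proof.
move=> m_gt0 le_m2n.
have five_split : (2 ^ n + 2 ^ (n - 2) = 5 * 2 ^ (n - 2 - m) * 2 ^ m)%N.
  have pow2_n : (2 ^ n = 2 ^ (n - 2) * 4)%N by rewrite -(expnD 2 _ 2) subnK //; lia.
  have pow2_n2 : (2 ^ (n - 2) = 2 ^ (n - 2 - m) * 2 ^ m)%N by rewrite -expnD subnK //; lia.
  by rewrite pow2_n pow2_n2; move: (2 ^ (n - 2 - m))%N (2 ^ m)%N => p q; lia.
rewrite five_split delta3_odd_dyadic // -five_split ones_mul_pow2 expr2 mulN1r opprK mul1r.
have odd_n2 : odd (n - 2) = odd n by lia.
apply: mod3_sum_eqmod; rewrite -modnDm !expn2_mod3 odd_n2; by case: (odd n).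
Qed.

Theorem theorem2 :
  (forall n : nat, (2 <= n)%N ->
     delta3_odd 0 (2 ^ n) = 3 ^+ (n./2 - 1)%N)
  /\
  (forall n m : nat,
     (~~ odd n -> ~~ odd m -> (2 <= m)%N -> (m <= n - 2)%N ->
        delta3_odd (2 ^ n) (2 ^ n + 2 ^ m) = 0)
  /\ (odd n -> ~~ odd m -> (2 <= m)%N -> (m <= n - 1)%N ->
        delta3_odd (2 ^ n) (2 ^ n + 2 ^ m) = 3 ^+ ((m - 2) %/ 2)%N)
  /\ (~~ odd n -> odd m -> (3 <= m)%N -> (m <= n - 1)%N ->
        delta3_odd (2 ^ n) (2 ^ n + 2 ^ m) = - 3 ^+ ((m - 3) %/ 2)%N)
  /\ (odd n -> odd m -> (3 <= m)%N -> (m <= n - 2)%N ->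
        delta3_odd (2 ^ n) (2 ^ n + 2 ^ m) = 2 * 3 ^+ ((m - 3) %/ 2)%N))
  /\
  (forall n m : nat,
     (~~ odd n -> ~~ odd m -> (2 <= m)%N -> (m <= n - 4)%N ->
        delta3_odd (2 ^ n + 2 ^ (n - 2)) (2 ^ n + 2 ^ (n - 2) + 2 ^ m)
          = - 3 ^+ ((m - 2) %/ 2)%N)
  /\ (odd n -> ~~ odd m -> (2 <= m)%N -> (m <= n - 3)%N ->
        delta3_odd (2 ^ n + 2 ^ (n - 2)) (2 ^ n + 2 ^ (n - 2) + 2 ^ m) = 0)
  /\ (~~ odd n -> odd m -> (3 <= m)%N -> (m <= n - 3)%N ->
        delta3_odd (2 ^ n + 2 ^ (n - 2)) (2 ^ n + 2 ^ (n - 2) + 2 ^ m)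
          = - (2 * 3 ^+ ((m - 3) %/ 2)%N))
  /\ (odd n -> odd m -> (3 <= m)%N -> (m <= n - 4)%N ->
        delta3_odd (2 ^ n + 2 ^ (n - 2)) (2 ^ n + 2 ^ (n - 2) + 2 ^ m)
          = 3 ^+ ((m - 3) %/ 2)%N)).
Proof.
split; [|split].
- move=> n n_ge2; have := @delta3_odd_dyadic 0 n (ltnW n_ge2).
  rewrite mul0n add0n expr0 mul1r => ->.
  have [[T20 _ _] [T30 _ _]] := (mod3_sum2, mod3_sum3).
  case: (boolP (odd n)) => [n_odd|n_even].
  + by rewrite mod3_sum_odd ?T30 ?mulr1 //; [congr (_ ^+ _); lia | lia].
  + by rewrite mod3_sum_even ?T20 ?mulr1 //; congr (_ ^+ _); lia.
- have [[_ T21 T22] [_ T31 T32]] := (mod3_sum2, mod3_sum3).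
  move=> n m; split; [|split; [|split]] => n_par m_par m_ge m_le;
    rewrite delta3_odd_pow2 ?(negbTE n_par) ?n_par; try lia.
  + by rewrite mod3_sum_even // T21 mulr0 oppr0.
  + by rewrite mod3_sum_even // T22 mulrN1 opprK.
  + by rewrite mod3_sum_odd // T31 mulr1.
  + by rewrite mod3_sum_odd // T32 mulrN opprK mulrC.
- have [[_ T21 T22] [_ T31 T32]] := (mod3_sum2, mod3_sum3).
  move=> n m; split; [|split; [|split]] => n_par m_par m_ge m_le;
    rewrite delta3_odd_5pow2 ?(negbTE n_par) ?n_par; try lia.
  + by rewrite mod3_sum_even // T22 mulrN1.
  + by rewrite mod3_sum_even // T21 mulr0.
  + by rewrite mod3_sum_odd // T32 mulrN mulrC.
  + by rewrite mod3_sum_odd // T31 mulr1.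
Qed.
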